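(* With $d=\delta(1-\delta)$, $x(p)=\frac{p^2-d(1-p)^2}{p^2+d(1-p)^2}$ and $R_v^{\max}(n)=n\big(1-(1-x(p)^2)^{1/(2n)}\big)$ as the maximal saved resource for $n$ nodes (defined on the region $p^2\ge d(1-p)^2$, $p<1$), for every fixed $n\ge1$ and fixed $\delta\in[1/2,1)$, $R_v^{\max}(n)$ is a non-decreasing function of $p$ on that region; i.e., as the noisy state $\rho(p,\delta)$ becomes noisier (closer to the separable state $|01\rangle\langle01|$), the maximal saved resource increases.
   Context: $\rho(p,\delta)=p|01\rangle\langle01|+(1-p)|\zeta_\delta\rangle\langle\zeta_\delta|$ with $|\zeta_\delta\rangle=\sqrt\delta|00\rangle+\sqrt{1-\delta}|11\rangle$. In the $n$-node repeater where segment $S_1$ shares $\rho(p,\delta)$ and all $n$ free segments share the same pure state of concurrence $\mathcal{C}$, end-to-end optimal fully entangled fraction equal to that of $\rho(p,\delta)$ is achieved whenever $\frac{1+\sqrt{1-\mathcal{C}^{2n}}}{2}\le\frac{p^2}{p^2+d(1-p)^2}$; the saved resource is $R_v=n(1-\mathcal{C})$, and $R_v^{\max}(n)$ is its maximum over $\mathcal{C}$ satisfying this condition. *)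

From Stdlib Require Import Reals Lra.
Open Scope R_scope.

Definition dpar (delta : R) : R := delta * (1 - delta).

Definition xfun (delta p : R) : R :=
  (p ^ 2 - dpar delta * (1 - p) ^ 2) / (p ^ 2 + dpar delta * (1 - p) ^ 2).

Definition Rvmax (n : nat) (delta p : R) : R :=
  INR n * (1 - Rpower (1 - xfun delta p ^ 2) (1 / (2 * INR n))).

Definition region (delta p : R) : Prop :=
  0 <= p /\ p < 1 /\ dpar delta * (1 - p) ^ 2 <= p ^ 2.

(* With D = d (1 - p)^2 > 0, x(p) = (p^2 - D)/(p^2 + D) is an increasing function of
   the ratio p^2 / D = (p / (1 - p))^2 / d, hence of p, and stays in [0, 1) on the
   region.  The saved resource n (1 - (1 - x^2)^(1/(2n))) is non-decreasing in
   x on [0, 1) because y |-> y^(1/(2n)) is monotone on positive reals. *)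
From Stdlib Require Import Reals Lra Psatz.
Open Scope R_scope.

Lemma dpar_pos (delta : R) : 0 < delta < 1 -> 0 < dpar delta.
Proof. intros Hd; unfold dpar; nra. Qed.

Lemma Rdiv_diff_sum_le (a1 b1 a2 b2 : R) :
  0 <= a1 -> 0 < b1 -> 0 <= a2 -> 0 < b2 -> a1 * b2 <= a2 * b1 ->
  (a1 - b1) / (a1 + b1) <= (a2 - b2) / (a2 + b2).
Proof.
  intros Ha1 Hb1 Ha2 Hb2 Hcross.
  apply (Rmult_le_reg_r ((a1 + b1) * (a2 + b2))); [nra|].
  replace ((a1 - b1) / (a1 + b1) * ((a1 + b1) * (a2 + b2)))
    with ((a1 - b1) * (a2 + b2)) by (field; lra).
  replace ((a2 - b2) / (a2 + b2) * ((a1 + b1) * (a2 + b2)))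
    with ((a2 - b2) * (a1 + b1)) by (field; lra).
  nra.
Qed.

Lemma xfun_range (delta p : R) :
  0 < dpar delta -> region delta p -> 0 <= xfun delta p < 1.
Proof.
  intros Hd [Hp0 [Hp1 Hreg]]; unfold xfun.
  assert (HD : 0 < dpar delta * (1 - p) ^ 2) by (apply Rmult_lt_0_compat; nra).
  split.
  - apply Rmult_le_pos; [nra | apply Rlt_le, Rinv_0_lt_compat; nra].
  - apply (Rmult_lt_reg_r (p ^ 2 + dpar delta * (1 - p) ^ 2)); [nra|].
    unfold Rdiv; rewrite Rmult_assoc, Rinv_l; nra.
Qed.

Lemma xfun_le (delta p1 p2 : R) :
  0 < dpar delta -> region delta p1 -> region delta p2 -> p1 <= p2 ->
  xfun delta p1 <= xfun delta p2.
Proof.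
  intros Hd [Ha1 [Hb1 _]] [Ha2 [Hb2 _]] Hp; unfold xfun.
  assert (Hodds : 0 <= p1 * (1 - p2) <= p2 * (1 - p1)) by nra.
  assert (HD1 : 0 < dpar delta * (1 - p1) ^ 2) by (apply Rmult_lt_0_compat; nra).
  assert (HD2 : 0 < dpar delta * (1 - p2) ^ 2) by (apply Rmult_lt_0_compat; nra).
  assert (Hsq : (p1 * (1 - p2)) ^ 2 <= (p2 * (1 - p1)) ^ 2) by nra.
  apply Rdiv_diff_sum_le; nra.
Qed.

Lemma saved_resource_le (n : nat) (x1 x2 : R) :
  0 <= x1 <= x2 -> x2 < 1 ->
  INR n * (1 - Rpower (1 - x1 ^ 2) (1 / (2 * INR n)))
  <= INR n * (1 - Rpower (1 - x2 ^ 2) (1 / (2 * INR n))).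
Proof.
  intros Hx Hx2.
  destruct n as [|m]; [simpl; lra|].
  assert (Hexp : 0 <= 1 / (2 * INR (S m))).
  { apply Rlt_le, Rdiv_lt_0_compat; [lra|].
    pose proof (lt_0_INR (S m) (Nat.lt_0_succ m)); lra. }
  assert (Hpow : Rpower (1 - x2 ^ 2) (1 / (2 * INR (S m)))
                 <= Rpower (1 - x1 ^ 2) (1 / (2 * INR (S m))))
    by (apply Rle_Rpower_l; [exact Hexp | split; nra]).
  apply Rmult_le_compat_l; [apply pos_INR | lra].
Qed.

Theorem mainTheorem7 :
  forall (n : nat) (delta p1 p2 : R),
    (1 <= n)%nat ->
    1 / 2 <= delta < 1 ->
    region delta p1 -> region delta p2 ->
    p1 <= p2 ->
    Rvmax n delta p1 <= Rvmax n delta p2.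
Proof.
  intros n delta p1 p2 _ Hdelta Hr1 Hr2 Hp.
  assert (Hd : 0 < dpar delta) by (apply dpar_pos; lra).
  pose proof (xfun_range delta p1 Hd Hr1) as Hx1.
  pose proof (xfun_range delta p2 Hd Hr2) as Hx2.
  pose proof (xfun_le delta p1 p2 Hd Hr1 Hr2 Hp) as Hx12.
  apply saved_resource_le; lra.
Qed.
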